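(* Every function $\pi_{3,5}$ has maximum distortion at least $3$.
   Context: For positive integers $n,k$, let $\mathcal S_{n,k}$ be the set of all multisets of size $n$ with elements from $[k]=\{1,\dots,k\}$. A function $\pi_{n,k}$ assigns to each $S\in\mathcal S_{n,k}$ a string $\pi_{n,k}(S)$ of length $n$ (positions indexed by $[n]$) whose letters, counted with multiplicity, form exactly the multiset $S$. For strings $X,Y$ of equal length, $d(X,Y)$ denotes their Hamming distance. For multisets $A,B$, the symmetric difference $A\oplus B$ is the multiset obtained by removing from $A$ and from $B$ their maximal common sub-multiset and taking the union of what remains. A pair $S,S'\in\mathcal S_{n,k}$ with $|S\oplus S'|=2$ has distortion $d(\pi_{n,k}(S),\pi_{n,k}(S'))$; the maximum distortion of $\pi_{n,k}$ is the maximum distortion over all such pairs. *)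

From mathcomp Require Import all_boot.
Set Implicit Arguments. Unset Strict Implicit. Unset Printing Implicit Defensive.

(* The alphabet [k] = {1,...,k} is represented by 'I_k = {0,...,k-1}. *)

(* A multiset over [k] is its multiplicity function; S_{n,k} = multisets of size n. *)
Definition mset (n k : nat) := {m : {ffun 'I_k -> nat} | \sum_(i < k) m i == n}.

Definition letters (n k : nat) (w : n.-tuple 'I_k) : {ffun 'I_k -> nat} :=
  [ffun i => count_mem i w].

(* |A (+) B|: remove the maximal common sub-multiset (pointwise min) from both
   and count what remains: sum_i (A i - min) + (B i - min). *)
Definition symdiff_size (k : nat) (A B : {ffun 'I_k -> nat}) : nat :=
  \sum_(i < k) ((A i - minn (A i) (B i)) + (B i - minn (A i) (B i))).

Definition hamming (n k : nat) (X Y : n.-tuple 'I_k) : nat :=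
  \sum_(i < n) (tnth X i != tnth Y i).

Definition valid_pi (n k : nat) (pi : mset n k -> n.-tuple 'I_k) : Prop :=
  forall S : mset n k, letters (pi S) = val S.

Definition max_distortion_ge (n k : nat) (pi : mset n k -> n.-tuple 'I_k) (d : nat) : Prop :=
  exists S S' : mset n k,
    symdiff_size (val S) (val S') = 2 /\ d <= hamming (pi S) (pi S').

From mathcomp Require Import all_boot.
From Stdlib Require Import Classical.
Set Implicit Arguments. Unset Strict Implicit. Unset Printing Implicit Defensive.

(* The proof is a certified exhaustive search.  If pi had distortion < 3, then
   p := pi o (multiset of letters) would label every string t with a
   rearrangement p t of t, so that strings whose letter multisets are at
   symmetric distance 2 receive labels at Hamming distance < 3.  A generic
   backtracking procedure [no_labelling] refutes the existence of such a
   labelling on a given list of strings; its soundness is proved once and for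
   all.  It then suffices to run it (by [vm_compute]) on the ten increasing
   strings over 'I_5 with three distinct letters: these multisets alone already
   force distortion 3.
   To make the search computable, sums over ordinals and the enumeration of
   tuples are re-expressed through explicit lists ([ords], [tuples]). *)

(* The ordinals of 'I_k in increasing order, built without [insub] so that the
   list reduces under [vm_compute]. *)
Fixpoint ords (k : nat) : seq 'I_k :=
  if k is m.+1 then ord0 :: map (lift ord0) (ords m) else [::].

Lemma mem_ords k (i : 'I_k) : i \in ords k.
Proof.
elim: k i => [|k IHk] i; first by case: i.
by case: (unliftP ord0 i) => [j ->|->]; rewrite inE ?eqxx // map_f ?orbT.
Qed.

Lemma sum_ords k (F : 'I_k -> nat) : \sum_(i < k) F i = sumn (map F (ords k)).
Proof.
elim: k F => [|k IHk] F; first by rewrite big_ord0.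
by rewrite big_ord_recl IHk /= -map_comp.
Qed.

Fixpoint tuples (k n : nat) : seq (n.-tuple 'I_k) :=
  if n is m.+1 then [seq cons_tuple x t | x <- ords k, t <- tuples k m]
  else [:: [tuple]].

Lemma mem_tuples k n (t : n.-tuple 'I_k) : t \in tuples k n.
Proof.
elim: n t => [|n IHn] t; first by rewrite tuple0 inE.
by case/tupleP: t => x t; apply/allpairsP; exists (x, t); rewrite mem_ords IHn.
Qed.

Section StringsAndMultisets.
Variables (n k : nat).
Implicit Types (s t u : n.-tuple 'I_k).

Lemma sum_count_mem (w : seq 'I_k) : \sum_(i < k) count_mem i w = size w.
Proof.
elim: w => [|x w IHw] /=; first by rewrite big1.
rewrite big_split /= IHw (bigD1 x) //= eqxx big1 ?add1n ?addn0 // => i.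
by rewrite eq_sym => /negbTE ->.
Qed.

Lemma letters_sum t : \sum_(i < k) letters t i == n.
Proof.
apply/eqP; rewrite -[RHS](size_tuple t) -sum_count_mem.
by apply: eq_bigr => i _; rewrite ffunE.
Qed.

Definition mset_of t : mset n k := exist _ (letters t) (letters_sum t).

Lemma letters_perm_eq s t : letters s = letters t -> perm_eq s t.
Proof.
by move/ffunP=> E; apply/allP => x _; have := E x; rewrite !ffunE /= => ->.
Qed.

Definition rearrangements t : seq (n.-tuple 'I_k) :=
  filter (fun u : n.-tuple 'I_k => perm_eq u t) (tuples k n).

Lemma mem_rearrangements u t : (u \in rearrangements t) = perm_eq u t.
Proof. by rewrite mem_filter mem_tuples andbT. Qed.

Definition symdiff_count s t : nat :=
  sumn [seq (count_mem i s - minn (count_mem i s) (count_mem i t)) +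
            (count_mem i t - minn (count_mem i s) (count_mem i t)) | i <- ords k].

Lemma symdiff_countE s t : symdiff_size (letters s) (letters t) = symdiff_count s t.
Proof.
by rewrite /symdiff_size sum_ords; congr sumn; apply: eq_map => i; rewrite !ffunE.
Qed.

Definition hamming_count s t : nat :=
  sumn [seq nat_of_bool (tnth s i != tnth t i) | i <- ords n].

Lemma hamming_countE s t : hamming s t = hamming_count s t.
Proof. exact: sum_ords. Qed.

Definition adjacent s t : bool := symdiff_count s t == 2.

End StringsAndMultisets.

Section Labelling.
(* Labelling the elements of A by elements of B, each a from a list [cands a] of
   candidates, such that [adj a a'] forces [close] labels.  [no_labelling order
   asg] tries every extension of the partial labelling [asg] to the elements of
   [order], and succeeds when all of them violate a constraint. *)
Variables (A B : eqType).
Variables (cands : A -> seq B) (adj : A -> A -> bool) (close : B -> B -> bool).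

Definition compatible (a : A) (b : B) (asg : seq (A * B)) : bool :=
  all (fun x => adj a x.1 ==> close b x.2) asg.

(* The recursive call sits in an [if] so that [vm_compute] only explores
   compatible branches. *)
Fixpoint no_labelling (order : seq A) (asg : seq (A * B)) : bool :=
  if order is a :: o then
    all (fun b => if compatible a b asg then no_labelling o ((a, b) :: asg) else true)
        (cands a)
  else false.

Lemma no_labelling_sound (p : A -> B) order asg :
  no_labelling order asg ->
  (forall x, x \in asg -> p x.1 = x.2) ->
  (forall a, p a \in cands a) ->
  (forall a a', adj a a' -> close (p a) (p a')) -> False.
Proof.
elim: order asg => [|a o IHo] asg //= /allP refuted asg_p p_cands p_close.
have := refuted _ (p_cands a); case: ifP => [_ refuted_o|/negP incompatible _].
  by apply: (IHo _ refuted_o) => // x; rewrite inE => /orP [/eqP -> //|/asg_p].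
apply: incompatible; apply/allP => -[a' b'] /asg_p /= <-.
by apply/implyP/p_close.
Qed.

End Labelling.

Definition three_subsets : seq (3.-tuple 'I_5) :=
  filter (fun t : 3.-tuple 'I_5 => sorted (fun a b : 'I_5 => a < b) t) (tuples 5 3).

Lemma three_subsets_unlabellable :
  no_labelling (@rearrangements 3 5) (@adjacent 3 5)
    (fun X Y => hamming_count X Y < 3) three_subsets [::].
Proof. by vm_compute. Qed.

Theorem theorem3p1 (pi : mset 3 5 -> 3.-tuple 'I_5) :
  valid_pi pi -> max_distortion_ge pi 3.
Proof.
move=> valid; apply: NNPP => small_distortion.
apply: (no_labelling_sound (p := fun t => pi (mset_of t)))
  three_subsets_unlabellable _ _ _ => //.
- by move=> t; rewrite mem_rearrangements letters_perm_eq // valid.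
- move=> t t' adj_tt'; rewrite -hamming_countE ltnNge; apply/negP => far.
  apply: small_distortion; exists (mset_of t), (mset_of t').
  by rewrite /= symdiff_countE (eqP adj_tt').
Qed.
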